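(* Let $\mathfrak g$ be a perfect Lie algebra (i.e. $[\mathfrak g,\mathfrak g]=\mathfrak g$), let $k\ge2$ be an integer and let $m\in\mathbb F$ with $m\ne0$ and $m\notin\{-1,-2,-3,\dots\}$. If a linear map $f:\mathfrak g\to\mathfrak g$ satisfies $$m\, f([x_1,\dots,x_k])+\sum_{i=2}^{k}[x_1,\dots,x_{i-1},f([x_i,\dots,x_k])]=0$$ for all $x_1,\dots,x_k\in\mathfrak g$, then $f=0$.
   Context: All Lie algebras are finite-dimensional over an algebraically closed field $\mathbb F$ of characteristic zero. For $x_1,\dots,x_{n}\in\mathfrak g$, $[x_1,\dots,x_{n}]$ denotes the right-nested bracket $[x_1,[x_2,[\dots,[x_{n-1},x_{n}]\dots]]]$, with $[x]=x$ for a single element; thus the term $i=k$ of the sum is $[x_1,\dots,x_{k-1},f(x_k)]$. *)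

From HB Require Import structures.
From mathcomp Require Import all_boot all_order all_algebra.
Set Implicit Arguments. Unset Strict Implicit. Unset Printing Implicit Defensive.
Import Order.TTheory GRing.Theory Num.Theory.
Local Open Scope ring_scope.

Record lie_algebra (F : fieldType) (V : vectType F) := LieAlgebra {
  lbr : V -> V -> V;
  lbr_linl : forall (a : F) (x y z : V), lbr (a *: x + y) z = a *: lbr x z + lbr y z;
  lbr_linr : forall (a : F) (x y z : V), lbr z (a *: x + y) = a *: lbr z x + lbr z y;
  lbr_alt : forall x : V, lbr x x = 0;
  lbr_jacobi : forall x y z : V,
    lbr x (lbr y z) + lbr y (lbr z x) + lbr z (lbr x y) = 0
}.

Definition rnest (F : fieldType) (V : vectType F) (L : lie_algebra V)
  (s : seq V) (y : V) : V := foldr (lbr L) y s.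

(* right-nested bracket [x1, ..., xn] of a nonempty list, with [x] = x;
   (the empty list is never used; it is sent to 0) *)
Definition nest (F : fieldType) (V : vectType F) (L : lie_algebra V)
  (s : seq V) : V :=
  match s with
  | [::] => 0
  | x :: s' => rnest L (belast x s') (last x s')
  end.

Definition perfect (F : fieldType) (V : vectType F) (L : lie_algebra V) : Prop :=
  forall x : V, exists (n : nat) (c : 'I_n -> F) (a b : 'I_n -> V),
    x = \sum_(i < n) c i *: lbr L (a i) (b i).

From HB Require Import structures.
From mathcomp Require Import all_boot all_order all_algebra.
Import Order.TTheory GRing.Theory Num.Theory.
Local Open Scope ring_scope.

(* Let P(u, y) = sum_i [u_1, ..., u_i, f [u_(i+1), ..., u_j, y]] (depth_sum), so
   that the hypothesis reads P(u, y) = (1 - m) f [u, y] whenever |u| = k - 1.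
   Computing P(a :: w, x) once by splitting off a and once by merging the last
   two entries gives the "twist" identity
     m f [a, [w, x]] + (1 - m) [a, f [w, x]] = [a, [w, f x]]     (|w| = k - 1),
   and since g is perfect and ad [b, c] = [ad b, ad c], the length of w can be
   lowered to 1.  Independently, the hypothesis for (c, u, x) expresses
   m f [c, _] through [c, P(u, x)], and the Jacobi identity then yields
   f [[b, c], z] = [b, f [c, z]] - [c, f [b, z]] (this is where m != 0 is used).
   Antisymmetrising the twist identity in a and d shows that f commutes with
   every ad e, hence P(u, y) = k f [u, y] and (m + k - 1) f [u, y] = 0; as the
   k-fold brackets span g, f = 0. *)

Section LieAlgebra.

Context {F : fieldType} {V : vectType F} (L : lie_algebra V).
Local Notation "[ x , y ]" := (lbr L x y).
Local Notation ad := (lbr L).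

HB.instance Definition _ a :=
  GRing.isLinear.Build F V V *:%R (ad a) (fun c x y => lbr_linr L c x y a).

Definition adr x : V -> V := ad^~ x.

HB.instance Definition _ x :=
  GRing.isLinear.Build F V V *:%R (adr x) (fun c a b => lbr_linl L c a b x).

Lemma lbrDl x y z : [x + y, z] = [x, z] + [y, z].
Proof. exact: (linearD (adr z)). Qed.

Lemma lbrC x y : [x, y] = - [y, x].
Proof.
apply/eqP; rewrite -addr_eq0; apply/eqP.
have := lbr_alt L (x + y).
by rewrite lbrDl !linearD /= (lbr_alt L x) (lbr_alt L y) add0r addr0.
Qed.

Lemma ad_lbr b c x : [[b, c], x] = [b, [c, x]] - [c, [b, x]].
Proof.
have := lbr_jacobi L b c x.
by rewrite (lbrC x b) (lbrC x) linearN /= => /subr0_eq.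
Qed.

Fact rnest_is_linear u : linear (rnest L u).
Proof. by elim: u => [|a u IHu] c x y //=; rewrite IHu linearP. Qed.

HB.instance Definition _ u :=
  GRing.isLinear.Build F V V *:%R (rnest L u) (rnest_is_linear u).

Lemma rnest_rcons u b y : rnest L (rcons u b) y = rnest L u [b, y].
Proof. exact: foldr_rcons. Qed.

Lemma nest_rcons u y : nest L (rcons u y) = rnest L u y.
Proof. by case: u => [|a u] //=; rewrite belast_rcons last_rcons. Qed.

Section DepthSum.

Variable f : {linear V -> V}.

Fixpoint depth_sum (u : seq V) (y : V) : V :=
  if u is a :: u' then f (rnest L u y) + [a, depth_sum u' y] else f y.

Lemma sum_nest_depth_sum u y :
  \sum_(1 <= i < (size u).+1)
     rnest L (take i (rcons u y)) (f (nest L (drop i (rcons u y))))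
  = depth_sum u y - f (rnest L u y).
Proof.
elim: u => [|a u IHu] /=; first by rewrite big_geq // subrr.
rewrite big_nat_recl //= take0 drop0 nest_rcons.
rewrite -(linear_sum (ad a)) /= IHu linearB /=.
by rewrite addrC subrK addrAC subrr add0r.
Qed.

Lemma depth_sum_rcons u b x :
  depth_sum (rcons u b) x = depth_sum u [b, x] + rnest L u [b, f x].
Proof.
elim: u => [|a u IHu] //=.
by rewrite IHu linearD /= addrA (rnest_rcons u b x).
Qed.

Lemma depth_sum_ad_commute u y : (forall a x, f [a, x] = [a, f x]) ->
  depth_sum u y = (size u).+1%:R *: f (rnest L u y).
Proof.
move=> fad; elim: u => [|a u IHu] /=; first by rewrite scale1r.
by rewrite IHu linearZ /= -fad -[_.+2%:R]natr1 scalerDl scale1r addrC.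
Qed.

End DepthSum.

Section Perfect.

Hypothesis hperf : perfect L.

Lemma perfect_eq (T1 T2 : {linear V -> V}) :
  (forall a b, T1 [a, b] = T2 [a, b]) -> T1 =1 T2.
Proof.
move=> eqT x; have [n [c [a [b ->]]]] := hperf x.
by rewrite !linear_sum; apply: eq_bigr => i _; rewrite !linearZ /= eqT.
Qed.

Lemma rnest_span_eq j (T1 T2 : {linear V -> V}) :
  (forall u x, size u = j -> T1 (rnest L u x) = T2 (rnest L u x)) -> T1 =1 T2.
Proof.
elim: j T1 T2 => [|j IHj] T1 T2 eqT y; first exact: (eqT [::]).
apply: perfect_eq => a b; apply: (IHj (T1 \o ad a) (T2 \o ad a)) => u x su.
by apply: (eqT (a :: u)); rewrite /= su.
Qed.

Lemma perfect_eq_lbr (X Y : {linear V -> V}) y z :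
  (forall b c, X [b, [c, y]] = Y [b, [c, z]]) -> forall d, X [d, y] = Y [d, z].
Proof.
move=> eq2; apply: (perfect_eq (X \o adr y) (Y \o adr z)) => b c /=.
by rewrite /adr !ad_lbr !linearB /= !eq2.
Qed.

Section Vanishing.

Variables (f : {linear V -> V}) (n : nat) (m : F).
Hypothesis m_neq0 : m != 0.
Hypothesis depth_sum_rnest : forall u y, size u = n.+1 ->
  depth_sum f u y = (1 - m) *: f (rnest L u y).

Lemma f_lbr_rnest a w x : size w = n ->
  m *: f [a, rnest L w x] = - [a, depth_sum f w x].
Proof.
move=> sw; have := depth_sum_rnest (a :: w) x; rewrite /= sw => /(_ erefl).
by rewrite scalerBl scale1r => /addrI ->; rewrite opprK.
Qed.

Definition twist a : {linear V -> V} :=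
  m \*: (f \o ad a) \+ (1 - m) \*: (ad a \o f).

Lemma twistE a v : twist a v = m *: f [a, v] + (1 - m) *: [a, f v].
Proof. by []. Qed.

Lemma twist_rnest_top a w x : size w = n.+1 ->
  twist a (rnest L w x) = [a, rnest L w (f x)].
Proof.
move=> sw.
have e : depth_sum f (a :: w) x
    = (1 - m) *: f [a, rnest L w x] + [a, rnest L w (f x)].
  rewrite lastI depth_sum_rcons depth_sum_rnest ?size_belast //.
  by rewrite -!rnest_rcons -lastI.
rewrite /= depth_sum_rnest // linearZ /= in e.
rewrite twistE -{1}(subKr 1 m) scalerBl scale1r addrAC e.
by rewrite addrAC subrr add0r.
Qed.

Lemma twist_rnest i a w x : (0 < size w)%N -> (size w + i)%N = n.+1 ->
  twist a (rnest L w x) = [a, rnest L w (f x)].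
Proof.
elim: i a w x => [|i IHi] a w x w_gt0 sw.
  by apply: twist_rnest_top; rewrite -sw addn0.
case: w w_gt0 sw => [|d w] // _ sw.
apply: (perfect_eq_lbr (twist a) (ad a)) => b c.
by apply: (IHi a (b :: c :: w)); rewrite //= -sw addSnnS.
Qed.

Lemma twist_lbr a d x : twist a [d, x] = [a, [d, f x]].
Proof. exact: (twist_rnest n a [:: d] x). Qed.

Lemma f_lbr_lbr b c z : f [[b, c], z] = [b, f [c, z]] - [c, f [b, z]].
Proof.
apply: (rnest_span_eq n (f \o ad [b, c])
  ((ad b \o f \o ad c) \- (ad c \o f \o ad b))) => u x su /=.
apply: (scalerI m_neq0).
rewrite scalerBr -[m *: [b, _]]linearZ -[m *: [c, _]]linearZ /= !f_lbr_rnest //.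
by rewrite ad_lbr !linearN /= opprB opprK [RHS]addrC.
Qed.

Lemma f_lbr e x : f [e, x] = [e, f x].
Proof.
apply: (perfect_eq (f \o adr x) (adr (f x))) => a d /=; rewrite /adr.
rewrite -[LHS]scale1r -(subrKC m 1) scalerDl {1}ad_lbr linearB /= f_lbr_lbr.
by rewrite ad_lbr -!twist_lbr !twistE !scalerBr opprD addrACA.
Qed.

End Vanishing.

End Perfect.

End LieAlgebra.

Theorem lemma2 (F : closedFieldType) (hF : [pchar F] =i pred0)
  (V : vectType F) (L : lie_algebra V) (hperf : perfect L)
  (k : nat) (hk : (2 <= k)%N) (m : F) (hm0 : m != 0)
  (hmneg : forall n : nat, m != - (n.+1)%:R)
  (f : {linear V -> V})
  (hf : forall xs : seq V, size xs = k ->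
     m *: f (nest L xs)
     + \sum_(1 <= i < k) rnest L (take i xs) (f (nest L (drop i xs))) = 0) :
  forall x : V, f x = 0.
Proof.
case: k hk hf => [|[|n]] // _ hf.
have depth_sum_rnest u y : size u = n.+1 ->
    depth_sum L f u y = (1 - m) *: f (rnest L u y).
  move=> su; have := hf (rcons u y).
  rewrite size_rcons su nest_rcons -su sum_nest_depth_sum addrCA.
  move=> /(_ erefl)/eqP.
  by rewrite addr_eq0 opprB scalerBl scale1r => /eqP.
have f_ad := f_lbr L hperf f n m hm0 depth_sum_rnest.
apply: (rnest_span_eq L hperf n.+1 f \0) => u y su /=.
have := depth_sum_rnest u y su; rewrite depth_sum_ad_commute // su => /eqP.
rewrite -subr_eq0 -scalerBl scaler_eq0 => /orP[|/eqP //].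
rewrite -natr1 opprB addrACA subrr addr0 addrC addr_eq0.
by move: (hmneg n) => /negbTE ->.
Qed.
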